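(* Let $\mathbf{A}=\langle A,\wedge,\vee,\cdot,1,0,{\sim},-,'\rangle$ be a quasi relation algebra. For $n\in\omega$ and $a\in A$ define $a^{\triangledown n}={\sim}^{2n}(a')$ and $a^{\vartriangle n}=-^{2n}(a')$. Then $\mathbf{A}^{\triangledown n}=\langle A,\wedge,\vee,\cdot,1,0,{\sim},-,{}^{\triangledown n}\rangle$ and $\mathbf{A}^{\vartriangle n}=\langle A,\wedge,\vee,\cdot,1,0,{\sim},-,{}^{\vartriangle n}\rangle$ are quasi relation algebras.
   Context: An FL-algebra $\langle A,\wedge,\vee,\cdot,1,\backslash,/,0\rangle$ is a residuated lattice (a lattice $\langle A,\wedge,\vee\rangle$, a monoid $\langle A,\cdot,1\rangle$, with $a\cdot b\le c \iff a\le c/b\iff b\le a\backslash c$) together with an arbitrary constant $0$. Define ${\sim}a=a\backslash 0$, $-a=0/a$ and $a+b={\sim}(-b\cdot -a)$. It is an InFL-algebra if ${\sim}{-}a={-}{\sim}a=a$ for all $a$. A quasi relation algebra (qRA) is an InFL-algebra with a unary operation $'$ such that for all $a,b$: $a''=a$, $(a\vee b)'=a'\wedge b'$, $({\sim}a)'=-(a')$, and $(a\cdot b)'=a'+b'$; it is written in the signature $\langle A,\wedge,\vee,\cdot,1,0,{\sim},-,'\rangle$ (the residuals being determined by this structure). ${\sim}^k a$, $-^k a$ denote $k$-fold applications. *)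

From Stdlib Require Import Arith.

Record FLops (A : Type) := mkFLops {
  meet : A -> A -> A;
  join : A -> A -> A;
  mul  : A -> A -> A;
  one  : A;
  ldiv : A -> A -> A;
  rdiv : A -> A -> A;
  zero : A
}.
Arguments meet {A} f _ _.
Arguments join {A} f _ _.
Arguments mul {A} f _ _.
Arguments one {A} f.
Arguments ldiv {A} f _ _.
Arguments rdiv {A} f _ _.
Arguments zero {A} f.

Section FL.
Context {A : Type} (o : FLops A).

Definition le (a b : A) : Prop := meet o a b = a.

Definition is_lattice : Prop :=
  (forall a b, meet o a b = meet o b a) /\
  (forall a b, join o a b = join o b a) /\
  (forall a b c, meet o a (meet o b c) = meet o (meet o a b) c) /\
  (forall a b c, join o a (join o b c) = join o (join o a b) c) /\
  (forall a b, meet o a (join o a b) = a) /\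
  (forall a b, join o a (meet o a b) = a).

Definition is_monoid : Prop :=
  (forall a b c, mul o a (mul o b c) = mul o (mul o a b) c) /\
  (forall a, mul o (one o) a = a) /\
  (forall a, mul o a (one o) = a).

Definition is_residuated : Prop :=
  forall a b c,
    (le (mul o a b) c <-> le a (rdiv o c b)) /\
    (le (mul o a b) c <-> le b (ldiv o a c)).

Definition is_FL : Prop := is_lattice /\ is_monoid /\ is_residuated.

Definition sim (a : A) : A := ldiv o a (zero o).
Definition minus (a : A) : A := rdiv o (zero o) a.
Definition plus (a b : A) : A := sim (mul o (minus b) (minus a)).

Definition is_InFL : Prop :=
  is_FL /\ forall a, sim (minus a) = a /\ minus (sim a) = a.

Definition is_qRA (pr : A -> A) : Prop :=
  is_InFL /\
  forall a b,
    pr (pr a) = a /\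
    pr (join o a b) = meet o (pr a) (pr b) /\
    pr (sim a) = minus (pr a) /\
    pr (mul o a b) = plus (pr a) (pr b).

End FL.

Definition tri_down {A : Type} (o : FLops A) (pr : A -> A) (n : nat) (a : A) : A :=
  Nat.iter (2 * n) (sim o) (pr a).
Definition tri_up {A : Type} (o : FLops A) (pr : A -> A) (n : nat) (a : A) : A :=
  Nat.iter (2 * n) (minus o) (pr a).

(** In an InFL-algebra the double negations [~~] and [--] are mutually inverse
    maps that preserve the order (hence meets), [~], [-] and, via the rotation
    [x y <= 0 <-> y (~~x) <= 0], also products.  The qRA axiom
    [(~a)' = -(a')] gives [(~~a)' = --(a')], so [f := (~~)^n] satisfies
    [' o f = f^-1 o '].  For any such map [f], [f o '] is again an involution
    ([f o ' o f o ' = f o f^-1 o ' o ' = id]) and [f] transports the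
    remaining axioms from [ '] to [f o ']; symmetrically for [(--)^n]. *)

From Stdlib Require Import Arith Lia.

Lemma iter_cancel {T : Type} (f g : T -> T) :
  (forall x, f (g x) = x) -> forall n x, Nat.iter n f (Nat.iter n g x) = x.
Proof.
  intros fgK n; induction n as [|n IH]; intro x; [reflexivity|].
  rewrite Nat.iter_succ_r, Nat.iter_succ, fgK. apply IH.
Qed.

Lemma iter_morph2 {T : Type} (f : T -> T) (op : T -> T -> T) :
  (forall x y, f (op x y) = op (f x) (f y)) ->
  forall n x y, Nat.iter n f (op x y) = op (Nat.iter n f x) (Nat.iter n f y).
Proof.
  intros f_op n; induction n as [|n IH]; intros x y; [reflexivity|].
  simpl. rewrite IH. apply f_op.
Qed.

Lemma iter_double {T : Type} (f : T -> T) n x :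
  Nat.iter (2 * n) f x = Nat.iter n (fun y => f (f y)) x.
Proof.
  induction n as [|n IH]; [reflexivity|].
  replace (2 * S n) with (S (S (2 * n))) by lia.
  rewrite !Nat.iter_succ, IH. reflexivity.
Qed.

Section Lattice.
Context {A : Type} (o : FLops A) (Hlat : is_lattice o).

Lemma meetC a b : meet o a b = meet o b a.
Proof. apply Hlat. Qed.

Lemma meetA a b c : meet o a (meet o b c) = meet o (meet o a b) c.
Proof. apply Hlat. Qed.

Lemma meet_id a : meet o a a = a.
Proof.
  destruct Hlat as (_ & _ & _ & _ & meet_join & join_meet).
  rewrite <- (join_meet a a) at 2. apply meet_join.
Qed.

Lemma le_refl a : le o a a.
Proof. apply meet_id. Qed.

Lemma le_anti a b : le o a b -> le o b a -> a = b.
Proof. unfold le; intros ab ba. rewrite <- ab, meetC. exact ba. Qed.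

Lemma le_trans a b c : le o a b -> le o b c -> le o a c.
Proof. unfold le; intros ab bc. rewrite <- ab, <- meetA, bc. reflexivity. Qed.

Lemma le_meet_l a b : le o (meet o a b) a.
Proof. unfold le. rewrite meetC, meetA, meet_id. reflexivity. Qed.

Lemma le_meet_r a b : le o (meet o a b) b.
Proof. unfold le. rewrite <- meetA, meet_id. reflexivity. Qed.

Lemma le_meet x a b : le o x (meet o a b) <-> le o x a /\ le o x b.
Proof.
  split.
  - intro x_ab. split; eapply le_trans; eauto using le_meet_l, le_meet_r.
  - unfold le; intros [xa xb]. rewrite meetA, xa. exact xb.
Qed.

Lemma eq_le_lower u v : (forall x, le o x u <-> le o x v) -> u = v.
Proof. intro E; apply le_anti; apply E, le_refl. Qed.

Lemma eq_le_upper u v : (forall x, le o u x <-> le o v x) -> u = v.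
Proof. intro E; apply le_anti; apply E, le_refl. Qed.

End Lattice.

Section InFL.
Context {A : Type} (o : FLops A) (HI : is_InFL o).

Let Hlat : is_lattice o. Proof. apply HI. Qed.

Lemma sim_minus a : sim o (minus o a) = a. Proof. apply HI. Qed.
Lemma minus_sim a : minus o (sim o a) = a. Proof. apply HI. Qed.

Lemma mulA a b c : mul o a (mul o b c) = mul o (mul o a b) c.
Proof. apply HI. Qed.

Lemma le_sim x y : le o y (sim o x) <-> le o (mul o x y) (zero o).
Proof. symmetry. apply HI. Qed.

Lemma le_minus x y : le o x (minus o y) <-> le o (mul o x y) (zero o).
Proof. symmetry. apply HI. Qed.

Lemma le_sim_minus x y : le o y (sim o x) <-> le o x (minus o y).
Proof. rewrite le_sim, le_minus. reflexivity. Qed.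

Lemma le_sim_sim a b : le o (sim o b) (sim o a) <-> le o a b.
Proof. rewrite le_sim_minus, minus_sim. reflexivity. Qed.

Definition sim2 a := sim o (sim o a).
Definition minus2 a := minus o (minus o a).

Lemma sim2K a : sim2 (minus2 a) = a.
Proof. unfold sim2, minus2. rewrite !sim_minus. reflexivity. Qed.

Lemma minus2K a : minus2 (sim2 a) = a.
Proof. unfold sim2, minus2. rewrite !minus_sim. reflexivity. Qed.

Lemma le_sim2_sim2 a b : le o (sim2 a) (sim2 b) <-> le o a b.
Proof. unfold sim2. rewrite !le_sim_sim. reflexivity. Qed.

Lemma mul_le_zero_rotate x y :
  le o (mul o x y) (zero o) <-> le o (mul o y (sim2 x)) (zero o).
Proof.
  rewrite <- (le_minus y), <- (le_sim x). unfold sim2. rewrite minus_sim.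
  reflexivity.
Qed.

Lemma eq_mul_le_zero z1 z2 :
  (forall w, le o (mul o z1 w) (zero o) <-> le o (mul o z2 w) (zero o)) -> z1 = z2.
Proof.
  intro E; apply (eq_le_upper o Hlat); intro x.
  rewrite <- (minus_sim x), !le_minus. apply E.
Qed.

Lemma sim2_mul a b : sim2 (mul o a b) = mul o (sim2 a) (sim2 b).
Proof.
  apply eq_mul_le_zero; intro w. rewrite <- (sim2K w). set (c := minus2 w).
  rewrite <- !mul_le_zero_rotate, <- mulA, mul_le_zero_rotate, <- mulA,
    mul_le_zero_rotate, <- mulA, mul_le_zero_rotate, <- mulA.
  reflexivity.
Qed.

(** Join and [1] are deliberately absent: only the operations on the
    right-hand sides of the qRA axioms have to be preserved. *)
Record InFL_hom (f : A -> A) : Prop := {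
  hom_meet : forall a b, f (meet o a b) = meet o (f a) (f b);
  hom_sim : forall a, f (sim o a) = sim o (f a);
  hom_minus : forall a, f (minus o a) = minus o (f a);
  hom_mul : forall a b, f (mul o a b) = mul o (f a) (f b)
}.

Lemma InFL_hom_iter f n : InFL_hom f -> InFL_hom (Nat.iter n f).
Proof.
  intros [f_meet f_sim f_minus f_mul]; split.
  - exact (iter_morph2 f _ f_meet n).
  - intro a. symmetry.
    exact (Nat.iter_swap_gen _ _ _ _ _ (fun x => eq_sym (f_sim x)) n a).
  - intro a. symmetry.
    exact (Nat.iter_swap_gen _ _ _ _ _ (fun x => eq_sym (f_minus x)) n a).
  - exact (iter_morph2 f _ f_mul n).
Qed.

Lemma InFL_hom_sim2 : InFL_hom sim2.
Proof.
  split.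
  - intros a b. apply (eq_le_lower o Hlat); intro x.
    rewrite <- (sim2K x), le_meet, !le_sim2_sim2, le_meet by exact Hlat. reflexivity.
  - reflexivity.
  - intro a. unfold sim2. rewrite sim_minus, minus_sim. reflexivity.
  - exact sim2_mul.
Qed.

Lemma InFL_hom_inverse f g :
  InFL_hom f -> (forall a, f (g a) = a) -> (forall a, g (f a) = a) -> InFL_hom g.
Proof.
  intros [f_meet f_sim f_minus f_mul] fgK gfK; split; intros.
  - rewrite <- (gfK (meet o (g a) (g b))), f_meet, !fgK. reflexivity.
  - rewrite <- (gfK (sim o (g a))), f_sim, !fgK. reflexivity.
  - rewrite <- (gfK (minus o (g a))), f_minus, !fgK. reflexivity.
  - rewrite <- (gfK (mul o (g a) (g b))), f_mul, !fgK. reflexivity.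
Qed.

Lemma InFL_hom_minus2 : InFL_hom minus2.
Proof. exact (InFL_hom_inverse _ _ InFL_hom_sim2 sim2K minus2K). Qed.

End InFL.

Section qRA.
Context {A : Type} (o : FLops A) (pr : A -> A) (Hpr : is_qRA o pr).

Let HI : is_InFL o. Proof. apply Hpr. Qed.

Lemma pr_sim a : pr (sim o a) = minus o (pr a).
Proof. apply (proj2 Hpr a a). Qed.

Lemma pr_minus a : pr (minus o a) = sim o (pr a).
Proof.
  rewrite <- (sim_minus o HI (pr (minus o a))), <- pr_sim, (sim_minus o HI a).
  reflexivity.
Qed.

Lemma pr_sim2 a : pr (sim2 o a) = minus2 o (pr a).
Proof. unfold sim2, minus2. rewrite !pr_sim. reflexivity. Qed.

Lemma pr_minus2 a : pr (minus2 o a) = sim2 o (pr a).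
Proof. unfold sim2, minus2. rewrite !pr_minus. reflexivity. Qed.

Lemma is_qRA_twist (f g p : A -> A) :
  InFL_hom o f -> (forall a, f (g a) = a) -> (forall a, pr (f a) = g (pr a)) ->
  (forall a, p a = f (pr a)) -> is_qRA o p.
Proof.
  intros [f_meet f_sim f_minus f_mul] fgK pr_f p_def.
  split; [exact HI|]. intros a b.
  destruct (proj2 Hpr a b) as (prK & pr_join & pr_sim_ab & pr_mul).
  rewrite !p_def. repeat split.
  - rewrite pr_f, prK. apply fgK.
  - rewrite pr_join. apply f_meet.
  - rewrite pr_sim_ab. apply f_minus.
  - rewrite pr_mul. unfold plus. rewrite f_sim, f_mul, !f_minus. reflexivity.
Qed.

End qRA.

Theorem theorem2p5 (A : Type) (o : FLops A) (pr : A -> A) (n : nat) :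
  is_qRA o pr ->
  is_qRA o (tri_down o pr n) /\ is_qRA o (tri_up o pr n).
Proof.
  intro Hpr. assert (HI : is_InFL o) by apply Hpr.
  split.
  - apply (is_qRA_twist o pr Hpr (Nat.iter n (sim2 o)) (Nat.iter n (minus2 o))).
    + apply InFL_hom_iter, InFL_hom_sim2, HI.
    + apply iter_cancel, (sim2K o HI).
    + apply Nat.iter_swap_gen, (pr_sim2 o pr Hpr).
    + intro a. unfold tri_down. rewrite iter_double. reflexivity.
  - apply (is_qRA_twist o pr Hpr (Nat.iter n (minus2 o)) (Nat.iter n (sim2 o))).
    + apply InFL_hom_iter, InFL_hom_minus2, HI.
    + apply iter_cancel, (minus2K o HI).
    + apply Nat.iter_swap_gen, (pr_minus2 o pr Hpr).
    + intro a. unfold tri_up. rewrite iter_double. reflexivity.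
Qed.
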